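(* If $(L,\alpha_L)$ is an $\alpha$-perfect Hom-Leibniz algebra, then the map $\mathrm{Aut}(L,\alpha_L)\to\{g\in\mathrm{Aut}(\mathfrak{uce}_\alpha(L),\overline{\alpha}):g(\mathrm{Ker}\,U_\alpha)=\mathrm{Ker}\,U_\alpha\}$, $h\mapsto\mathfrak{uce}_\alpha(h)$, is a group isomorphism.
   Context: Hom-Leibniz algebras are multiplicative: $(L,\alpha_L)$ is a $\mathbb{K}$-vector space with bilinear bracket and linear $\alpha_L$ such that $[\alpha_L(x),[y,z]]=[[x,y],\alpha_L(z)]-[[x,z],\alpha_L(y)]$ and $\alpha_L[x,y]=[\alpha_L(x),\alpha_L(y)]$; homomorphisms preserve brackets and commute with structure maps; $\mathrm{Aut}$ denotes the group of bijective homomorphisms. $(L,\alpha_L)$ is $\alpha$-perfect if $L=[\alpha_L(L),\alpha_L(L)]$. For $\alpha$-perfect $(L,\alpha_L)$: $I_L\subseteq\alpha_L(L)\otimes\alpha_L(L)$ is spanned by $-[x_1,x_2]\otimes\alpha_L(x_3)+[x_1,x_3]\otimes\alpha_L(x_2)+\alpha_L(x_1)\otimes[x_2,x_3]$; $\mathfrak{uce}_\alpha(L)=(\alpha_L(L)\otimes\alpha_L(L))/I_L$ with classes $\{\alpha_L(x_1),\alpha_L(x_2)\}$, bracket $[\{a,b\},\{c,e\}]=\{[a,b],[c,e]\}$, endomorphism $\overline{\alpha}\{\alpha_L(x_1),\alpha_L(x_2)\}=\{\alpha_L^2(x_1),\alpha_L^2(x_2)\}$, and $U_\alpha:\mathfrak{uce}_\alpha(L)\to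 L$, $U_\alpha\{a,b\}=[a,b]$. For $h\in\mathrm{Aut}(L,\alpha_L)$, $\mathfrak{uce}_\alpha(h)\{\alpha_L(x_1),\alpha_L(x_2)\}=\{\alpha_L(h(x_1)),\alpha_L(h(x_2))\}$. *)

(* Hom-Leibniz algebras over a field K, and the
   alpha-universal central extension uce_alpha(L) = (alpha(L) (x) alpha(L)) / I_L,
   built as the textbook quotient of the free vector space on alpha(L) x alpha(L)
   by the bilinearity relations and the generators of I_L. *)
From HB Require Import structures.
From mathcomp Require Import all_boot all_order all_algebra.
From Stdlib Require Import ClassicalEpsilon.
Set Implicit Arguments. Unset Strict Implicit. Unset Printing Implicit Defensive.
Import Order.TTheory GRing.Theory Num.Theory.
Local Open Scope ring_scope.

Section HomLeibniz.
Variables (K : fieldType) (L : lmodType K) (br : L -> L -> L) (al : L -> L).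

Definition lin (f : L -> L) : Prop :=
  forall (a : K) (u v : L), f (a *: u + v) = a *: f u + f v.

Definition hom_leibniz : Prop :=
  [/\ (forall x, lin (br x)), (forall y, lin (fun x => br x y)), lin al,
      (forall x y z, br (al x) (br y z) = br (br x y) (al z) - br (br x z) (al y))
    & (forall x y, al (br x y) = br (al x) (al y))].

Definition alpha_perfect : Prop :=
  forall z : L, exists s : seq (K * (L * L)),
    z = \sum_(t <- s) t.1 *: br (al t.2.1) (al t.2.2).

Definition hom_L (h : L -> L) : Prop :=
  [/\ lin h, (forall x y, h (br x y) = br (h x) (h y)) & (forall x, h (al x) = al (h x))].
Definition aut_L (h : L -> L) : Prop := hom_L h /\ bijective h.

(* Formal sums: a term (c, (x, y)) stands for c . (alpha x (x) alpha y),
   so formal sums range exactly over the free space on alpha(L) x alpha(L). *)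
Definition FS := seq (K * (L * L)).

Definition coef (s : FS) (p : L * L) : K :=
  \sum_(t <- s | (al t.2.1, al t.2.2) == p) t.1.

Definition scale_fs (k : K) (s : FS) : FS := [seq (k * t.1, t.2) | t <- s].

(* generators of the relations: bilinearity in each slot, and the generators
   -[x1,x2] (x) alpha x3 + [x1,x3] (x) alpha x2 + alpha x1 (x) [x2,x3] of I_L
   (with [x1,x2] = alpha w1 etc., i.e. the generators lying in
   alpha(L) (x) alpha(L)). *)
Definition rel_gen (g : FS) : Prop :=
  (exists (c : K) (x x' y : L),
      g = [:: (1, (c *: x + x', y)); (- c, (x, y)); (-1, (x', y))]) \/
  (exists (c : K) (x y y' : L),
      g = [:: (1, (x, c *: y + y')); (- c, (x, y)); (-1, (x, y'))]) \/
  (exists x1 x2 x3 w1 w2 w3 : L,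
      [/\ al w1 = br x1 x2, al w2 = br x1 x3, al w3 = br x2 x3 &
      g = [:: (-1, (w1, x3)); (1, (w2, x2)); (1, (x1, w3))]]).

Definition in_rel (s : FS) : Prop :=
  exists gs : seq (K * FS), List.Forall (fun u => rel_gen u.2) gs /\
    coef s = coef (flatten [seq scale_fs u.1 u.2 | u <- gs]).

Definition fs_equiv (s t : FS) : Prop := in_rel (s ++ scale_fs (-1) t).

Definition uce := {P : FS -> Prop | exists s : FS, P = fs_equiv s}.

Definition ucls (s : FS) : uce :=
  exist (fun P => exists s0 : FS, P = fs_equiv s0) (fs_equiv s) (ex_intro _ s erefl).

Definition urepr (c : uce) : FS :=
  proj1_sig (constructive_indefinite_description _ (proj2_sig c)).

(* {alpha x1, alpha x2} *)
Definition ugen (x1 x2 : L) : uce := ucls [:: (1, (x1, x2))].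

Definition uadd (c d : uce) : uce := ucls (urepr c ++ urepr d).
Definition uscale (k : K) (c : uce) : uce := ucls (scale_fs k (urepr c)).
Definition uzero : uce := ucls [::].

(* bracket [{a,b},{c,e}] = {[a,b],[c,e]}, extended bilinearly
   ({alpha x1,alpha x2} |-> [alpha x1, alpha x2] = alpha [x1,x2]) *)
Definition ubr (c d : uce) : uce :=
  ucls [seq (t.1 * u.1, (br t.2.1 t.2.2, br u.2.1 u.2.2)) | t <- urepr c, u <- urepr d].

(* alpha-bar {alpha x1, alpha x2} = {alpha^2 x1, alpha^2 x2} *)
Definition ualpha (c : uce) : uce :=
  ucls [seq (t.1, (al t.2.1, al t.2.2)) | t <- urepr c].

Definition Ualpha (c : uce) : L :=
  \sum_(t <- urepr c) t.1 *: br (al t.2.1) (al t.2.2).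

(* uce_alpha(h) {alpha x1, alpha x2} = {alpha (h x1), alpha (h x2)} *)
Definition uce_map (h : L -> L) (c : uce) : uce :=
  ucls [seq (t.1, (h t.2.1, h t.2.2)) | t <- urepr c].

Definition aut_uce (g : uce -> uce) : Prop :=
  [/\ (forall (a : K) (u v : uce), g (uadd (uscale a u) v) = uadd (uscale a (g u)) (g v)),
      (forall c d, g (ubr c d) = ubr (g c) (g d)),
      (forall c, g (ualpha c) = ualpha (g c))
    & bijective g].

Definition preserves_ker (g : uce -> uce) : Prop :=
  forall d : uce, Ualpha d = 0 <-> exists c : uce, Ualpha c = 0 /\ g c = d.

End HomLeibniz.

Arguments hom_leibniz {K L} br al.
Arguments alpha_perfect {K L} br al.
Arguments hom_L {K L} br al h.
Arguments aut_L {K L} br al h.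
Arguments uce_map {K L} br al h c.
Arguments aut_uce {K L br al} g.
Arguments preserves_ker {K L br al} g.

From Pilot Require Import Defs.
From HB Require Import structures.
From mathcomp Require Import all_boot all_order all_algebra.
From mathcomp Require Import ring.
From Stdlib Require Import FunctionalExtensionality PropExtensionality.
From Stdlib Require Import ProofIrrelevance ClassicalEpsilon.
Set Implicit Arguments. Unset Strict Implicit. Unset Printing Implicit Defensive.
Import GRing.Theory.
Local Open Scope ring_scope.

(* Every evaluation of a
   formal sum through alpha x alpha depends only on its coefficients; with the
   Hom-Leibniz identity this makes U_alpha well defined, and for a homomorphism h
   it makes uce_alpha(h) well defined.  Bilinearity of the relations shows that
   the bracket of uce_alpha(L) only depends on the U_alpha-images of its
   arguments, and alpha-perfectness makes U_alpha surjective.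
   The theorem then follows: uce_alpha is functorial, so uce_alpha(h) is an
   automorphism with inverse uce_alpha(h^-1); U_alpha o uce_alpha(h) = h o U_alpha
   gives injectivity; and a kernel-stabilising automorphism g descends along
   U_alpha to an automorphism h of L with uce_alpha(h) = g, because both agree
   on the generators {alpha x, alpha y} = [{..}, {..}]. *)

Section UceAlpha.
Variables (K : fieldType) (L : lmodType K) (br : L -> L -> L) (al : L -> L).

Local Notation FS := (FS (K:=K) L).
Local Notation coef := (coef al).
Local Notation pi t := (al t.2.1, al t.2.2).

Lemma coef_nil p : coef [::] p = 0.
Proof. by rewrite /Defs.coef big_nil. Qed.

Lemma coef_cons t s p : coef (t :: s) p = (if pi t == p then t.1 else 0) + coef s p.
Proof. by rewrite /Defs.coef big_cons; case: ifP => _; rewrite ?add0r. Qed.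

Lemma coef_cat s t p : coef (s ++ t) p = coef s p + coef t p.
Proof. by rewrite /Defs.coef big_cat. Qed.

Lemma coef_scale k s p : coef (scale_fs k s) p = k * coef s p.
Proof.
elim: s => [|t s IH]; first by rewrite /= coef_nil mulr0.
by rewrite /= !coef_cons IH mulrDr; case: ifP => _; rewrite ?mulr0.
Qed.

Lemma coef_lincomb (gs : seq (K * FS)) p :
  coef (flatten [seq scale_fs u.1 u.2 | u <- gs]) p = \sum_(u <- gs) u.1 * coef u.2 p.
Proof.
elim: gs => [|u gs IH]; first by rewrite /= coef_nil big_nil.
by rewrite /= coef_cat IH coef_scale big_cons.
Qed.

Definition relspan (f : L * L -> K) : Prop :=
  exists gs : seq (K * FS), List.Forall (fun u => rel_gen br al u.2) gs /\
    f = coef (flatten [seq scale_fs u.1 u.2 | u <- gs]).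

Lemma relspan_ext f g : relspan f -> f =1 g -> relspan g.
Proof. by move=> Hf /functional_extensionality <-. Qed.

Lemma relspan0 : relspan (fun _ => 0).
Proof.
exists [::]; split => //; apply: functional_extensionality => p; by rewrite coef_nil.
Qed.

Lemma relspanD f g : relspan f -> relspan g -> relspan (fun p => f p + g p).
Proof.
move=> [gs [Fg ->]] [hs [Fh ->]]; exists (gs ++ hs); split; first exact/List.Forall_app.
by apply: functional_extensionality => p; rewrite map_cat flatten_cat coef_cat.
Qed.

Lemma relspanZ k f : relspan f -> relspan (fun p => k * f p).
Proof.
move=> [gs [F ->]]; exists [seq (k * u.1, u.2) | u <- gs]; split.
  by elim: gs F => [|u gs IH] //= F; inversion F; constructor => //; apply: IH.
apply: functional_extensionality => p; rewrite !coef_lincomb big_map mulr_sumr.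
by apply: eq_bigr => u _; rewrite mulrA.
Qed.

Lemma relspan_gen g : rel_gen br al g -> relspan (coef g).
Proof.
move=> Hg; exists [:: (1, g)]; split; first by constructor.
by apply: functional_extensionality => p; rewrite coef_lincomb big_seq1 mul1r.
Qed.

Definition eqv (s t : FS) : Prop := relspan (fun p => coef s p - coef t p).

Lemma fs_equivE s t : fs_equiv br al s t <-> eqv s t.
Proof.
by rewrite /fs_equiv /in_rel -/(relspan _); split => H; apply: relspan_ext H _ => p;
  rewrite coef_cat coef_scale mulN1r.
Qed.

Lemma eqv_diff s t : eqv s t <-> relspan (coef (s ++ scale_fs (-1) t)).
Proof. exact: iff_sym (fs_equivE s t). Qed.

Lemma eqv_coef s t : coef s =1 coef t -> eqv s t.
Proof. by move=> E; apply: relspan_ext relspan0 _ => p; rewrite E subrr. Qed.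

Lemma eqv_refl s : eqv s s.
Proof. exact: eqv_coef. Qed.

Lemma eqv_sym s t : eqv s t -> eqv t s.
Proof. by move=> /(relspanZ (-1)) H; apply: relspan_ext H _ => p; ring. Qed.

Lemma eqv_trans s t u : eqv s t -> eqv t u -> eqv s u.
Proof. by move=> H1 H2; apply: relspan_ext (relspanD H1 H2) _ => p; ring. Qed.

Lemma eqv_cat s s' t t' : eqv s s' -> eqv t t' -> eqv (s ++ t) (s' ++ t').
Proof.
by move=> H1 H2; apply: relspan_ext (relspanD H1 H2) _ => p; rewrite !coef_cat; ring.
Qed.

Lemma eqv_scale k s t : eqv s t -> eqv (scale_fs k s) (scale_fs k t).
Proof. by move=> /(relspanZ k) H; apply: relspan_ext H _ => p; rewrite !coef_scale; ring. Qed.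

Lemma eqv_rel g s t : rel_gen br al g -> coef g =1 (fun p => coef s p - coef t p) -> eqv s t.
Proof. by move=> /relspan_gen Hg E; apply: relspan_ext Hg _. Qed.

Ltac coefs := move=> ?; rewrite ?coef_cons ?coef_nil /=; repeat case: ifP => _; ring.

Lemma eqv_linl c x x' y : eqv [:: (1, (c *: x + x', y))] [:: (c, (x, y)); (1, (x', y))].
Proof. by apply: (@eqv_rel [:: (1, (c *: x + x', y)); (- c, (x, y)); (-1, (x', y))]);
  [left; exists c, x, x', y | coefs]. Qed.

Lemma eqv_linr c x y y' : eqv [:: (1, (x, c *: y + y'))] [:: (c, (x, y)); (1, (x, y'))].
Proof. by apply: (@eqv_rel [:: (1, (x, c *: y + y')); (- c, (x, y)); (-1, (x, y'))]);
  [right; left; exists c, x, y, y' | coefs]. Qed.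

Lemma eqv_zerol y : eqv [::] [:: (1, (0, y))].
Proof. by apply: (@eqv_rel [:: (1, (1 *: 0 + 0, y)); (- 1, (0, y)); (-1, (0, y))]);
  [left; exists 1, 0, 0, y | rewrite scale1r addr0; coefs]. Qed.

Lemma eqv_zeror x : eqv [::] [:: (1, (x, 0))].
Proof. by apply: (@eqv_rel [:: (1, (x, 1 *: 0 + 0)); (- 1, (x, 0)); (-1, (x, 0))]);
  [right; left; exists 1, x, 0, 0 | rewrite scale1r addr0; coefs]. Qed.

Lemma eqv_collectl (s : seq (K * L)) y :
  eqv [seq (u.1, (u.2, y)) | u <- s] [:: (1, (\sum_(u <- s) u.1 *: u.2, y))].
Proof.
elim: s => [|[k x] s IH]; first by rewrite big_nil; exact: eqv_zerol.
rewrite big_cons; apply: eqv_trans (eqv_cat (eqv_refl [:: (k, (x, y))]) IH) _.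
exact/eqv_sym/eqv_linl.
Qed.

Lemma eqv_collectr (s : seq (K * L)) x :
  eqv [seq (u.1, (x, u.2)) | u <- s] [:: (1, (x, \sum_(u <- s) u.1 *: u.2))].
Proof.
elim: s => [|[k y] s IH]; first by rewrite big_nil; exact: eqv_zeror.
rewrite big_cons; apply: eqv_trans (eqv_cat (eqv_refl [:: (k, (x, y))]) IH) _.
exact/eqv_sym/eqv_linr.
Qed.

Lemma eqv_move_scalar k x y : eqv [:: (1, (x, k *: y))] [:: (1, (k *: x, y))].
Proof.
have Hl := eqv_collectl [:: (k, x)] y; have Hr := eqv_collectr [:: (k, y)] x.
rewrite /= !big_seq1 in Hl Hr; exact: eqv_trans (eqv_sym Hr) Hl.
Qed.

Lemma eqv_alpha x y x' y' :
  al x = al x' -> al y = al y' -> eqv [:: (1, (x, y))] [:: (1, (x', y'))].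
Proof. by move=> E1 E2; apply: eqv_coef => p; rewrite !coef_cons E1 E2. Qed.

Definition brp (s t : FS) : FS :=
  [seq (a.1 * b.1, (br a.2.1 a.2.2, br b.2.1 b.2.2)) | a <- s, b <- t].
Definition Xs (s : FS) : L := \sum_(a <- s) a.1 *: br a.2.1 a.2.2.

Lemma eqv_brp s t : eqv (brp s t) [:: (1, (Xs s, Xs t))].
Proof.
elim: s => [|a s IH]; first by rewrite /Xs big_nil; exact: eqv_zerol.
rewrite /brp /= -/(brp s t).
have Erow : [seq (a.1 * b.1, (br a.2.1 a.2.2, br b.2.1 b.2.2)) | b <- t] =
  [seq (u.1, (br a.2.1 a.2.2, u.2)) | u <- [seq (a.1 * b.1, br b.2.1 b.2.2) | b <- t]].
  by rewrite -map_comp.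
have Esum : \sum_(u <- [seq (a.1 * b.1, br b.2.1 b.2.2) | b <- t]) u.1 *: u.2 = a.1 *: Xs t.
  by rewrite big_map /Xs scaler_sumr; apply: eq_bigr => b _; rewrite scalerA.
have Hrow := eqv_collectr [seq (a.1 * b.1, br b.2.1 b.2.2) | b <- t] (br a.2.1 a.2.2).
rewrite Esum in Hrow; rewrite Erow.
apply: eqv_trans (eqv_cat (eqv_trans Hrow (eqv_move_scalar _ _ _)) IH) _.
have Hcol := eqv_collectl [:: (1, a.1 *: br a.2.1 a.2.2); (1, Xs s)] (Xs t).
by rewrite /= !big_cons big_nil !scale1r addr0 in Hcol; rewrite /Xs big_cons.
Qed.

Local Notation U := (uce br al).
Local Notation ucls := (ucls br al).

Lemma ucls_eq s t : eqv s t -> ucls s = ucls t.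
Proof.
move=> E; have Hf : fs_equiv br al s = fs_equiv br al t.
  apply: functional_extensionality => u; apply: propositional_extensionality.
  rewrite !fs_equivE; split; [exact: eqv_trans (eqv_sym E) | exact: eqv_trans E].
rewrite /Defs.ucls; move: (ex_intro _ s _) (ex_intro _ t _); rewrite Hf => p q.
by rewrite (proof_irrelevance _ p q).
Qed.

Lemma ucls_eqv s t : ucls s = ucls t -> eqv s t.
Proof.
move=> /(congr1 (@proj1_sig _ _)) /= E.
have : fs_equiv br al t t by apply/fs_equivE; exact: eqv_refl.
by rewrite -E => /fs_equivE.
Qed.

Lemma ucls_repr (c : U) : ucls (urepr c) = c.
Proof.
rewrite /urepr; case: (constructive_indefinite_description _ _) => s /= E.
case: c E => P pf /= E; subst P; rewrite /Defs.ucls; congr exist; exact: proof_irrelevance.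
Qed.

Lemma repr_eqv s : eqv (urepr (ucls s)) s.
Proof. exact/ucls_eqv/ucls_repr. Qed.

Lemma ucls_surj (c : U) : exists s, c = ucls s.
Proof. by exists (urepr c); rewrite ucls_repr. Qed.

Lemma uadd_cls s t : uadd (ucls s) (ucls t) = ucls (s ++ t).
Proof. by apply/ucls_eq/eqv_cat; exact: repr_eqv. Qed.

Lemma uscale_cls k s : uscale k (ucls s) = ucls (scale_fs k s).
Proof. by apply/ucls_eq/eqv_scale; exact: repr_eqv. Qed.

Lemma ubr_cls s t :
  ubr (ucls s) (ucls t) = ucls [:: (1, (Xs (urepr (ucls s)), Xs (urepr (ucls t))))].
Proof. exact/ucls_eq/eqv_brp. Qed.

Definition eval (V : lmodType K) (G : L * L -> V) (s : FS) : V :=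
  \sum_(t <- s) t.1 *: G (pi t).

Lemma eval_support (V : lmodType K) (G : L * L -> V) s (r : seq (L * L)) :
  uniq r -> {subset [seq pi t | t <- s] <= r} -> eval G s = \sum_(q <- r) coef s q *: G q.
Proof.
move=> Ur; elim: s => [|t s IH] Hs.
  by rewrite /eval big_nil big1 // => q _; rewrite coef_nil scale0r.
rewrite /eval big_cons -/(eval G s) IH; last by move=> q Hq; apply: Hs; rewrite inE Hq orbT.
under [RHS]eq_bigr => q _ do rewrite coef_cons scalerDl.
rewrite big_split /=; congr (_ + _).
have Ht : pi t \in r by apply: Hs; rewrite inE eqxx.
rewrite (bigD1_seq (pi t)) //= eqxx big1 ?addr0 // => q Hq.
by rewrite eq_sym (negbTE Hq) scale0r.
Qed.

Lemma eval_coef (V : lmodType K) (G : L * L -> V) s s' :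
  coef s =1 coef s' -> eval G s = eval G s'.
Proof.
move=> E; set r := undup [seq pi t | t <- s ++ s'].
have S1 : {subset [seq pi t | t <- s] <= r}.
  by move=> q Hq; rewrite mem_undup map_cat mem_cat Hq.
have S2 : {subset [seq pi t | t <- s'] <= r}.
  by move=> q Hq; rewrite mem_undup map_cat mem_cat Hq orbT.
rewrite (eval_support G (undup_uniq _) S1) (eval_support G (undup_uniq _) S2).
by apply: eq_bigr => q _; rewrite E.
Qed.

Definition Ev (s : FS) : L := eval (fun q => br q.1 q.2) s.

Lemma Ev_cat s t : Ev (s ++ t) = Ev s + Ev t.
Proof. by rewrite /Ev /eval big_cat. Qed.

Lemma Ev_scale k s : Ev (scale_fs k s) = k *: Ev s.
Proof. by rewrite /Ev /eval big_map scaler_sumr; apply: eq_bigr => t _; rewrite scalerA. Qed.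

Lemma Ev_lincomb (gs : seq (K * FS)) :
  Ev (flatten [seq scale_fs u.1 u.2 | u <- gs]) = \sum_(u <- gs) u.1 *: Ev u.2.
Proof.
elim: gs => [|u gs IH]; first by rewrite /Ev /eval !big_nil.
by rewrite /= Ev_cat IH Ev_scale big_cons.
Qed.

Lemma lin0 (f : L -> L) : lin f -> f 0 = 0.
Proof.
move=> Hf; have := Hf 1 0 0; rewrite !scale1r addr0 => E.
by apply: (addrI (f 0)); rewrite addr0 -E.
Qed.

Lemma lin_sum (f : L -> L) (I : Type) (r : seq I) (c : I -> K) (F : I -> L) :
  lin f -> f (\sum_(i <- r) c i *: F i) = \sum_(i <- r) c i *: f (F i).
Proof.
move=> Hf; elim: r => [|i r IH]; first by rewrite !big_nil lin0.
by rewrite !big_cons Hf IH.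
Qed.

Definition mapF (f : L -> L) (s : FS) : FS := [seq (t.1, (f t.2.1, f t.2.2)) | t <- s].

Lemma mapF_comp f g s : mapF f (mapF g s) = mapF (f \o g) s.
Proof. by rewrite /mapF -map_comp. Qed.

Lemma mapF_id s : mapF id s = s.
Proof. by rewrite /mapF; elim: s => [|[k [x y]] s IH] //=; rewrite IH. Qed.

Lemma mapF_lincomb f (gs : seq (K * FS)) :
  mapF f (flatten [seq scale_fs u.1 u.2 | u <- gs]) =
  flatten [seq scale_fs u.1 u.2 | u <- [seq (u.1, mapF f u.2) | u <- gs]].
Proof.
elim: gs => [|u gs IH] //=.
by rewrite -IH /mapF /scale_fs map_cat -!map_comp.
Qed.

Section Homomorphisms.
Hypothesis HL : hom_leibniz br al.

(* The relations lie in the kernel of Ev (this is where the Hom-Leibniz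
   identity enters), hence Ev, and so U_alpha, is well defined on classes. *)
Lemma Ev_rel g : rel_gen br al g -> Ev g = 0.
Proof.
case: HL => Hbl Hbr Hal Hlb _.
case=> [[c [x [x' [y ->]]]]|[[c [x [y [y' ->]]]]|[x1 [x2 [x3 [w1 [w2 [w3 [E1 E2 E3 ->]]]]]]]]];
  rewrite /Ev /eval !big_cons big_nil /= addr0 ?scale1r ?scaleN1r ?scaleNr.
- by rewrite Hal Hbr addrACA !subrr addr0.
- by rewrite Hal Hbl addrACA !subrr addr0.
- by rewrite E1 E2 E3 Hlb [X in _ + X]addrC subrK addNr.
Qed.

Lemma Ev_relspan s : relspan (coef s) -> Ev s = 0.
Proof.
move=> [gs [F E]].
rewrite /Ev (eval_coef _ (fun p => congr1 (fun f => f p) E)) -/(Ev _) Ev_lincomb.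
elim: gs F {E} => [|u gs IH] F; first by rewrite big_nil.
by inversion F; subst; rewrite big_cons IH // Ev_rel // scaler0 add0r.
Qed.

Lemma Ev_eqv s t : eqv s t -> Ev s = Ev t.
Proof.
move=> /eqv_diff /Ev_relspan; rewrite Ev_cat Ev_scale scaleN1r => /eqP.
by rewrite subr_eq0 => /eqP.
Qed.

Lemma U_cls s : Ualpha (ucls s) = Ev s.
Proof. exact: Ev_eqv (repr_eqv s). Qed.

Lemma hom_alpha : hom_L br al al.
Proof. by case: HL => _ _ Hal _ Hmul; split. Qed.

Lemma hom_comp f g : hom_L br al f -> hom_L br al g -> hom_L br al (f \o g).
Proof.
move=> [Hf1 Hf2 Hf3] [Hg1 Hg2 Hg3]; split => /=.
- by move=> a u v /=; rewrite Hg1 Hf1.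
- by move=> x y /=; rewrite Hg2 Hf2.
- by move=> x /=; rewrite Hg3 Hf3.
Qed.

Lemma aut_inv h : aut_L br al h ->
  exists hi, [/\ aut_L br al hi, cancel h hi & cancel hi h].
Proof.
move=> [[H1 H2 H3] [hi c1 c2]]; exists hi; split => //; split; last by exists h.
split.
- by move=> a u v; apply: (can_inj c1); rewrite H1 !c2.
- by move=> x y; apply: (can_inj c1); rewrite H2 !c2.
- by move=> x; apply: (can_inj c1); rewrite H3 !c2.
Qed.

Section Morphism.
Variable f : L -> L.
Hypothesis Hf : hom_L br al f.

Lemma coef_mapF s p : coef (mapF f s) p = eval (V := K^o) (fun q => ((f q.1, f q.2) == p)%:R) s.
Proof.
case: Hf => _ _ Hfa; rewrite /Defs.coef /eval big_map big_mkcond.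
by apply: eq_bigr => t _ /=; rewrite !Hfa; case: ifP => _; rewrite /GRing.scale /= ?mulr1 ?mulr0.
Qed.

Lemma mapF_rel g : rel_gen br al g -> rel_gen br al (mapF f g).
Proof.
case: Hf => Hfl Hfb Hfa.
case=> [[c [x [x' [y ->]]]]|[[c [x [y [y' ->]]]]|[x1 [x2 [x3 [w1 [w2 [w3 [E1 E2 E3 ->]]]]]]]]];
  rewrite /mapF /=.
- by left; exists c, (f x), (f x'), (f y); rewrite Hfl.
- by right; left; exists c, (f x), (f y), (f y'); rewrite Hfl.
- right; right; exists (f x1), (f x2), (f x3), (f w1), (f w2), (f w3).
  by rewrite -!Hfa E1 E2 E3 !Hfb.
Qed.

Lemma mapF_eqv s t : eqv s t -> eqv (mapF f s) (mapF f t).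
Proof.
move=> /eqv_diff [gs [F E]]; apply/eqv_diff.
exists [seq (u.1, mapF f u.2) | u <- gs]; split.
  elim: gs F {E} => [|u gs IH] F //=; inversion F; subst.
  by constructor; [exact: mapF_rel | exact: IH].
have -> : mapF f s ++ scale_fs (-1) (mapF f t) = mapF f (s ++ scale_fs (-1) t).
  by rewrite /mapF /scale_fs map_cat -!map_comp.
rewrite -mapF_lincomb; apply: functional_extensionality => p.
by rewrite !coef_mapF; apply: (@eval_coef K^o); rewrite E.
Qed.

Lemma Ev_mapF s : Ev (mapF f s) = f (Ev s).
Proof.
case: Hf => Hfl Hfb Hfa.
by rewrite /Ev /eval lin_sum // big_map; apply: eq_bigr => t _ /=; rewrite Hfb !Hfa.
Qed.

Lemma Xs_mapF s : Xs (mapF f s) = f (Xs s).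
Proof.
case: Hf => Hfl Hfb _.
by rewrite /Xs lin_sum // big_map; apply: eq_bigr => t _ /=; rewrite Hfb.
Qed.

Lemma umap_cls s : uce_map br al f (ucls s) = ucls (mapF f s).
Proof. exact/ucls_eq/mapF_eqv/repr_eqv. Qed.

Lemma U_umap (c : U) : Ualpha (uce_map br al f c) = f (Ualpha c).
Proof. by case: (ucls_surj c) => s ->; rewrite umap_cls !U_cls Ev_mapF. Qed.

End Morphism.

Lemma Ev_Xs s : Ev s = Xs (mapF al s).
Proof. by rewrite /Xs /Ev /eval big_map. Qed.

Lemma alpha_Xs s : al (Xs s) = Ev s.
Proof. by rewrite Ev_Xs Xs_mapF //; exact: hom_alpha. Qed.

Lemma ubr_U_cls s t : ubr (ucls s) (ucls t) = ucls [:: (1, (Xs s, Xs t))].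
Proof. by rewrite ubr_cls; apply/ucls_eq/eqv_alpha; rewrite !alpha_Xs; apply/Ev_eqv/repr_eqv. Qed.

Lemma U_ubr (c d : U) : Ualpha (ubr c d) = br (Ualpha c) (Ualpha d).
Proof.
case: (ucls_surj c) => s ->; case: (ucls_surj d) => t ->.
by rewrite ubr_U_cls !U_cls /Ev /eval big_seq1 scale1r /= !alpha_Xs.
Qed.

Lemma ubr_U (c c' d d' : U) : Ualpha c = Ualpha c' -> Ualpha d = Ualpha d' ->
  ubr c d = ubr c' d'.
Proof.
case: (ucls_surj c) => s ->; case: (ucls_surj d) => t ->.
case: (ucls_surj c') => s' ->; case: (ucls_surj d') => t' ->.
by rewrite !U_cls !ubr_U_cls => E1 E2; apply: ucls_eq; apply: eqv_alpha; rewrite !alpha_Xs.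
Qed.

Lemma U_ualpha (c : U) : Ualpha (ualpha c) = al (Ualpha c).
Proof. exact: (U_umap hom_alpha c). Qed.

Definition lin_u (G : U -> U) : Prop :=
  forall (a : K) (u v : U), G (uadd (uscale a u) v) = uadd (uscale a (G u)) (G v).

Lemma U_lin a (u v : U) : Ualpha (uadd (uscale a u) v) = a *: Ualpha u + Ualpha v.
Proof.
case: (ucls_surj u) => s ->; case: (ucls_surj v) => t ->.
by rewrite uscale_cls uadd_cls !U_cls Ev_cat Ev_scale.
Qed.

Lemma lin_u_zero G : lin_u G -> G (ucls [::]) = ucls [::].
Proof.
move=> HG; have := HG 1 (ucls [::]) (ucls [::]).
rewrite uscale_cls uadd_cls; case: (ucls_surj (G (ucls [::]))) => r ->.
rewrite uscale_cls uadd_cls => /ucls_eqv H; apply: ucls_eq.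
by apply: relspan_ext (relspanZ (-1) H) _ => p; rewrite coef_cat coef_scale coef_nil; ring.
Qed.

Lemma lin_u_ext G G' : lin_u G -> lin_u G' ->
  (forall x y, G (ugen br al x y) = G' (ugen br al x y)) -> G =1 G'.
Proof.
move=> HG HG' E c; case: (ucls_surj c) => s ->.
elim: s => [|[k [x y]] s IH]; first by rewrite !lin_u_zero.
have -> : ucls ((k, (x, y)) :: s) = uadd (uscale k (ugen br al x y)) (ucls s).
  by rewrite /ugen uscale_cls uadd_cls /= mulr1.
by rewrite HG HG' E IH.
Qed.

Lemma umap_lin f : hom_L br al f -> lin_u (uce_map br al f).
Proof.
move=> Hf a u v; case: (ucls_surj u) => s ->; case: (ucls_surj v) => t ->.
rewrite uscale_cls uadd_cls !umap_cls // uscale_cls uadd_cls.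
by rewrite /mapF /scale_fs map_cat -!map_comp.
Qed.

Lemma umap_br f (c d : U) : hom_L br al f ->
  uce_map br al f (ubr c d) = ubr (uce_map br al f c) (uce_map br al f d).
Proof.
move=> Hf; case: (ucls_surj c) => s ->; case: (ucls_surj d) => t ->.
by rewrite ubr_U_cls !umap_cls // ubr_U_cls /mapF /= !Xs_mapF.
Qed.

Lemma umap_comp f g (c : U) : hom_L br al f -> hom_L br al g ->
  uce_map br al (f \o g) c = uce_map br al f (uce_map br al g c).
Proof.
move=> Hf Hg; case: (ucls_surj c) => s ->.
by rewrite !umap_cls // ?mapF_comp //; exact: hom_comp.
Qed.

Lemma umap_alpha f (c : U) : hom_L br al f ->
  uce_map br al f (ualpha c) = ualpha (uce_map br al f c).
Proof.
move=> Hf; have [_ _ Hfa] := Hf.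
change (uce_map br al f (uce_map br al al c) = uce_map br al al (uce_map br al f c)).
rewrite -!umap_comp //; try exact: hom_alpha.
by congr uce_map; apply: functional_extensionality => x /=; exact: Hfa.
Qed.

Lemma umap_cancel f g : hom_L br al f -> hom_L br al g -> cancel f g ->
  cancel (uce_map br al f) (uce_map br al g).
Proof.
move=> Hf Hg fK c; rewrite -umap_comp //.
have -> : g \o f = id by apply: functional_extensionality => x /=; exact: fK.
by case: (ucls_surj c) => s ->; rewrite umap_cls ?mapF_id //; split.
Qed.

Lemma umap_aut h : aut_L br al h ->
  aut_uce (uce_map br al h) /\ preserves_ker (uce_map br al h).
Proof.
move=> Hh; have [hi [Hhi hK hiK]] := aut_inv Hh.
have [[Hhl _ _] _] := Hh; have [[Hhil _ _] _] := Hhi.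
have hhom := Hh.1; have hihom := Hhi.1.
split; first split.
- exact: umap_lin.
- by move=> c d; apply: umap_br.
- by move=> c; apply: umap_alpha.
- by exists (uce_map br al hi); apply: umap_cancel.
move=> d; split => [Hd | [c [Hc <-]]]; last by rewrite U_umap // Hc lin0.
exists (uce_map br al hi d); split; first by rewrite U_umap // Hd lin0.
exact: umap_cancel.
Qed.

Section Descent.
Hypothesis HP : alpha_perfect br al.

Lemma U_surj z : exists c : U, Ualpha c = z.
Proof. by case: (HP z) => s ->; exists (ucls s); rewrite U_cls. Qed.

Definition rep (z : L) : FS := proj1_sig (constructive_indefinite_description _ (HP z)).

Lemma Ev_rep z : Ev (rep z) = z.
Proof. by rewrite /rep; case: (constructive_indefinite_description _ _) => s /= ->. Qed.

Definition descend (G : U -> U) (z : L) : L := Ualpha (G (ucls (rep z))).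

Lemma descendU G : lin_u G -> (forall d, Ualpha d = 0 -> Ualpha (G d) = 0) ->
  forall c, descend G (Ualpha c) = Ualpha (G c).
Proof.
move=> HG HK c; set c' := ucls (rep (Ualpha c)).
have Hc' : Ualpha (uadd (uscale (-1) c') c) = 0 by rewrite U_lin U_cls Ev_rep scaleN1r addNr.
have := HK _ Hc'; rewrite HG U_lin scaleN1r => /eqP.
by rewrite addrC subr_eq0 => /eqP.
Qed.

Section Stabiliser.
Variable g : U -> U.
Hypotheses (Hg : aut_uce g) (Hker : preserves_ker g).

Lemma g_lin : lin_u g. Proof. by case: Hg. Qed.

Lemma g_ker d : Ualpha d = 0 -> Ualpha (g d) = 0.
Proof. by move=> Hd; apply/(Hker (g d)); exists d. Qed.

Local Notation h := (descend g).

Lemma hU c : h (Ualpha c) = Ualpha (g c).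
Proof. exact: descendU g_lin g_ker c. Qed.

Lemma descend_hom : hom_L br al h.
Proof.
case: Hg => Hl Hb Ha _; split.
- move=> a z w; case: (U_surj z) => c <-; case: (U_surj w) => d <-.
  by rewrite -U_lin !hU Hl U_lin.
- move=> z w; case: (U_surj z) => c <-; case: (U_surj w) => d <-.
  by rewrite -U_ubr !hU Hb U_ubr.
- by move=> z; case: (U_surj z) => c <-; rewrite -U_ualpha !hU Ha U_ualpha.
Qed.

Lemma descend_bij : bijective h.
Proof.
case: Hg => Hl _ _ [gi gK giK].
have gi_lin : lin_u gi by move=> a u v; apply: (can_inj gK); rewrite Hl !giK.
have gi_ker d : Ualpha d = 0 -> Ualpha (gi d) = 0.
  by move=> /(Hker d) [e [He <-]]; rewrite gK.
have hiU := descendU gi_lin gi_ker.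
exists (descend gi) => z; case: (U_surj z) => c <-.
- by rewrite hU hiU gK.
- by rewrite hiU hU giK.
Qed.

Lemma umap_descend : uce_map br al h = g.
Proof.
apply: functional_extensionality; apply: lin_u_ext; [exact: umap_lin descend_hom | exact: g_lin|].
move=> x y; case: Hg => _ Hb _ _.
have -> : ugen br al x y = ubr (ucls (mapF al (rep x))) (ucls (mapF al (rep y))).
  by rewrite ubr_U_cls -!Ev_Xs !Ev_rep.
by rewrite umap_br ?Hb; [apply: ubr_U; rewrite U_umap ?hU // | ]; exact: descend_hom.
Qed.

End Stabiliser.
End Descent.
End Homomorphisms.
End UceAlpha.

Theorem corollary4p4 (K : fieldType) (L : lmodType K)
    (br : L -> L -> L) (al : L -> L) :
  hom_leibniz br al -> alpha_perfect br al ->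
  [/\ (* h |-> uce(h) maps Aut(L) into the stabiliser of Ker U_alpha *)
      (forall h, aut_L br al h ->
         aut_uce (uce_map br al h) /\ preserves_ker (uce_map br al h)),
      (* it is a group homomorphism *)
      (forall h k, aut_L br al h -> aut_L br al k ->
         uce_map br al (h \o k) = uce_map br al h \o uce_map br al k),
      (* injective *)
      (forall h k, aut_L br al h -> aut_L br al k ->
         uce_map br al h = uce_map br al k -> h = k)
    & (* surjective onto the stabiliser *)
      (forall g, aut_uce g -> preserves_ker g ->
         exists h, aut_L br al h /\ uce_map br al h = g)].
Proof.
move=> HL HP; split.
- exact: umap_aut.
- move=> h k Hh Hk; apply: functional_extensionality => c.
  exact: umap_comp Hh.1 Hk.1.
- move=> h k Hh Hk E; apply: functional_extensionality => z.
  have [c <-] := U_surj HL HP z.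
  by rewrite -(U_umap HL Hh.1) -(U_umap HL Hk.1) E.
- move=> g Hg Hker; exists (descend HP g); split; last exact: umap_descend.
  by split; [exact: descend_hom | exact: descend_bij].
Qed.
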